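(* Consider a generalized linear model with data $\mathcal{D}=(X,\mathbf{y})$, $X\in\mathbb{R}^{n\times(p+1)}$ (first column the intercept column of ones), log-likelihood $\ell(\beta_0,\boldsymbol{\beta};\mathcal{D})$ with $-\ell$ convex in $(\beta_0,\boldsymbol{\beta})$, $m$ mandatory predictors (columns $1,\dots,m$), and fix $\lambda\ge 0$. For $\mathbf{t}=(t_1,\dots,t_{p-m})\in[0,1]^{p-m}$ let $T_{\mathbf{t}}=\mathrm{diag}(1,\dots,1,t_1,\dots,t_{p-m})\in\mathbb{R}^{p\times p}$ (with $m$ leading ones) and $\Gamma_{\mathbf{t}}=\sqrt{I-T_{\mathbf{t}}^2}$ (elementwise square root of the diagonal). For $\delta>0$ define $$h_{\delta,\lambda}(\mathbf{t},\beta_0,\boldsymbol{\beta})=-\tfrac1n\ell(\beta_0,T_{\mathbf{t}}\boldsymbol{\beta};\mathcal{D})+\lambda\|\boldsymbol{\beta}\|_2^2+\delta\|\Gamma_{\mathbf{t}}\boldsymbol{\beta}\|_2^2,\qquad f_{\delta,\lambda}(\mathbf{t})=\min_{\beta_0\in\mathbb{R},\,\boldsymbol{\beta}\in\mathbb{R}^p}h_{\delta,\lambda}(\mathbf{t},\beta_0,\boldsymbol{\beta}).$$ Then for every fixed $\mathbf{t}\in(0,1)^{p-m}$, the map $\delta\mapsto f_{\delta,\lambda}(\mathbf{t})$ is monotone non-decreasing and continuous on $\delta>0$.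
   Context: $\ell(\beta_0,\boldsymbol{\beta};\mathcal{D})$ denotes the log-likelihood of the GLM, which depends on the coefficients through the linear predictors $\beta_0+\mathbf{x}_i^\top\boldsymbol{\beta}$, $i=1,\dots,n$. The value function $f_{\delta,\lambda}(\mathbf{t})$ is the minimum (assumed attained) of the inner objective over the coefficients. *)

From HB Require Import structures.
From mathcomp Require Import all_boot all_order all_algebra.
From mathcomp Require Import all_classical all_reals all_analysis.
Set Implicit Arguments. Unset Strict Implicit. Unset Printing Implicit Defensive.
Import Order.TTheory GRing.Theory Num.Theory.
Local Open Scope ring_scope.
Local Open Scope classical_set_scope.

Section GLM.
Variable R : realType.

(* Log-likelihood of a GLM, as a function of the coefficients through the
   linear predictors  eta_i = b0 + x_i^T b :  ell(b0,b) = L(b0*1 + X b). *)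
Definition glm_loglik (n p : nat) (L : 'cV[R]_n -> R) (X : 'M[R]_(n, p))
  (b0 : R) (b : 'cV[R]_p) : R := L (const_mx b0 + X *m b).

(* Diagonal of T_t = diag(1,...,1 (m times), t_1,...,t_k), p = m + k. *)
Definition Tdiag (m k : nat) (t : 'cV[R]_k) (i : 'I_(m + k)) : R :=
  match fintype.split i with inl _ => 1 | inr j => t j 0 end.

Definition Tmul (m k : nat) (t : 'cV[R]_k) (b : 'cV[R]_(m + k)) : 'cV[R]_(m + k) :=
  \col_i (Tdiag (m:=m) t i * b i 0).

Definition Gmul (m k : nat) (t : 'cV[R]_k) (b : 'cV[R]_(m + k)) : 'cV[R]_(m + k) :=
  \col_i (Num.sqrt (1 - Tdiag (m:=m) t i ^+ 2) * b i 0).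

Definition sqnorm (q : nat) (v : 'cV[R]_q) : R := \sum_i v i 0 ^+ 2.

Definition hobj (n m k : nat) (L : 'cV[R]_n -> R) (X : 'M[R]_(n, m + k))
  (lam delta : R) (t : 'cV[R]_k) (b0 : R) (b : 'cV[R]_(m + k)) : R :=
  - (n%:R)^-1 * glm_loglik L X b0 (Tmul (m:=m) t b) + lam * sqnorm b
  + delta * sqnorm (Gmul (m:=m) t b).

(* f_{delta,lambda}(t) = min over (b0,b) of h (taken as the infimum; the
   minimum is assumed attained in the theorem). *)
Definition fval (n m k : nat) (L : 'cV[R]_n -> R) (X : 'M[R]_(n, m + k))
  (lam delta : R) (t : 'cV[R]_k) : R :=
  inf [set hobj L X lam delta t bb.1 bb.2 | bb in [set: R * 'cV[R]_(m + k)]].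

End GLM.

From HB Require Import structures.
From mathcomp Require Import all_boot all_order all_algebra.
From mathcomp Require Import all_classical all_reals all_analysis.
From mathcomp Require Import lra.
Set Implicit Arguments. Unset Strict Implicit. Unset Printing Implicit Defensive.
Import Order.TTheory GRing.Theory Num.Theory.
Import numFieldNormedType.Exports.
Local Open Scope ring_scope.
Local Open Scope classical_set_scope.

(* The objective is affine in delta, h_delta = a + delta * g with
   g = |Gamma_t b|^2 >= 0, so f is an infimum of nondecreasing affine functions
   of delta.  Comparing the optimal values at delta1 and delta2 through their
   minimizers gives the envelope bounds
     (delta2 - delta1) g(b2) <= f(delta2) - f(delta1) <= (delta2 - delta1) g(b1),
   whence monotonicity; and the lower bound, applied between delta/2 and points
   near delta, bounds g at nearby minimizers, which makes f locally Lipschitz. *)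

Definition minimizer (R : realType) (T : Type) (phi : T -> R) (x : T) :=
  forall y, phi x <= phi y.

Lemma inf_range_minimizer (R : realType) (T : Type) (phi : T -> R) (x : T) :
  minimizer phi x -> inf (range phi) = phi x.
Proof.
move=> xmin; apply/le_anti/andP; split.
  by apply: ge_inf; [exists (phi x) => _ [y _ <-]; exact: xmin | exists x].
by apply: lb_le_inf; [exists (phi x), x | move=> _ [y _ <-]; exact: xmin].
Qed.

Section AffinePenalty.
Variables (R : realType) (T : Type) (a g : T -> R).
Hypothesis g_ge0 : forall x, 0 <= g x.

Definition penalized (d : R) (x : T) : R := a x + d * g x.

Definition penalized_value (d : R) : R := inf (range (penalized d)).

Hypothesis minimizer_exists :
  forall d, 0 < d -> exists x, minimizer (penalized d) x.

Lemma penalized_value_sub_bounds d1 d2 x1 x2 :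
  minimizer (penalized d1) x1 -> minimizer (penalized d2) x2 ->
  (d2 - d1) * g x2 <= penalized_value d2 - penalized_value d1 <= (d2 - d1) * g x1.
Proof.
move=> x1min x2min.
rewrite /penalized_value (inf_range_minimizer x1min) (inf_range_minimizer x2min).
have := x1min x2; have := x2min x1; rewrite /penalized => le2 le1.
apply/andP; split; lra.
Qed.

Lemma penalized_value_nondecreasing d1 d2 :
  0 < d1 -> d1 <= d2 -> penalized_value d1 <= penalized_value d2.
Proof.
move=> d1_gt0 d12.
have [x1 x1min] := minimizer_exists d1_gt0.
have [x2 x2min] := minimizer_exists (lt_le_trans d1_gt0 d12).
have /andP[lower _] := penalized_value_sub_bounds x1min x2min.
rewrite -subr_ge0; apply: le_trans lower.
by rewrite mulr_ge0 ?subr_ge0.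
Qed.

Lemma penalized_value_locally_lipschitz d : 0 < d ->
  exists2 C, 0 <= C &
    forall x, `|x - d| <= d / 4 ->
      `|penalized_value x - penalized_value d| <= C * `|x - d|.
Proof.
move=> d_gt0; have [xd xdmin] := minimizer_exists d_gt0.
have hd_gt0 : 0 < d / 2 by lra.
have [xh xhmin] := minimizer_exists hd_gt0.
set D := penalized_value d - penalized_value (d / 2).
have D_ge0 : 0 <= D by rewrite subr_ge0 penalized_value_nondecreasing //; lra.
have D4_ge0 : 0 <= 4 * D / d by rewrite divr_ge0 ?mulr_ge0 // ltW.
exists (g xd + 4 * D / d); first by rewrite addr_ge0.
move=> x; rewrite ler_norml => /andP[xlo xhi].
have x_gt0 : 0 < x by lra.
have [y ymin] := minimizer_exists x_gt0.
have gy_ge0 := g_ge0 y; have gxd_ge0 := g_ge0 xd.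
have [dx | xd_lt] := lerP d x.
  have /andP[_ upper] := penalized_value_sub_bounds xdmin ymin.
  have mono := penalized_value_nondecreasing d_gt0 dx.
  rewrite !ger0_norm ?subr_ge0 //.
  apply: le_trans upper _; rewrite mulrC ler_wpM2r ?subr_ge0 //.
  by rewrite lerDl.
(* Between d/2 and x the lower envelope bound controls g at the minimizer y. *)
have /andP[gy_lower _] := penalized_value_sub_bounds xhmin ymin.
have Dx : penalized_value x - penalized_value (d / 2) <= D.
  by rewrite lerD2r penalized_value_nondecreasing ?ltW.
have gy_le : g y <= 4 * D / d.
  have : g y * (d / 4) <= D.
    apply: le_trans Dx; apply: le_trans gy_lower.
    by rewrite mulrC ler_wpM2r //; lra.
  rewrite ler_pdivlMr //; lra.
have /andP[_ upper] := penalized_value_sub_bounds ymin xdmin.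
have mono := penalized_value_nondecreasing x_gt0 (ltW xd_lt).
rewrite !ler0_norm ?subr_le0 ?(ltW xd_lt) // !opprB.
apply: le_trans upper _; rewrite mulrC ler_wpM2r ?subr_ge0 ?(ltW xd_lt) //.
lra.
Qed.

Lemma penalized_value_continuous d : 0 < d -> {for d, continuous penalized_value}.
Proof.
move=> d_gt0; have [C C_ge0 lip] := penalized_value_locally_lipschitz d_gt0.
apply/cvgrPdist_le => eps eps_gt0.
have C1_gt0 : 0 < C + 1 by lra.
exists (Num.min (d / 4) (eps / (C + 1))).
  by rewrite /= lt_min divr_gt0 //= divr_gt0.
move=> x /=; rewrite lt_min => /andP[xd4 xeps].
have xd_le : `|x - d| <= d / 4 by rewrite distrC ltW.
rewrite distrC ltr_pdivlMr // in xeps.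
rewrite distrC (le_trans (lip x xd_le)) // (le_trans _ (ltW xeps)) //.
by rewrite mulrC ler_wpM2l // lerDl.
Qed.

End AffinePenalty.

Theorem proposition1 (R : realType) (n m k : nat) (L : 'cV[R]_n -> R)
  (X : 'M[R]_(n, m + k)) (lam : R)
  (hn : (0 < n)%N)
  (hconv : forall (a1 a2 : R) (b1 b2 : 'cV[R]_(m + k)) (s : R), 0 <= s -> s <= 1 ->
     - glm_loglik L X (s * a1 + (1 - s) * a2) (s *: b1 + (1 - s) *: b2)
     <= s * (- glm_loglik L X a1 b1) + (1 - s) * (- glm_loglik L X a2 b2))
  (hlam : 0 <= lam)
  (t : 'cV[R]_k) (ht : forall j, 0 < t j 0 < 1)
  (hmin : forall delta : R, 0 < delta ->
     exists (b0 : R) (b : 'cV[R]_(m + k)), forall (c0 : R) (c : 'cV[R]_(m + k)),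
       hobj L X lam delta t b0 b <= hobj L X lam delta t c0 c) :
  (forall d1 d2 : R, 0 < d1 -> d1 <= d2 -> fval L X lam d1 t <= fval L X lam d2 t)
  /\ {within [set d : R | 0 < d], continuous ((fun d : R => fval L X lam d t) : R -> R)}.
Proof.
pose a (bb : R * 'cV[R]_(m + k)) :=
  - (n%:R)^-1 * glm_loglik L X bb.1 (Tmul (m:=m) t bb.2) + lam * sqnorm bb.2.
pose g (bb : R * 'cV[R]_(m + k)) := sqnorm (Gmul (m:=m) t bb.2).
have g_ge0 : forall bb, 0 <= g bb.
  by move=> bb; apply: sumr_ge0 => i _; exact: sqr_ge0.
have min_ex : forall d, 0 < d -> exists bb, minimizer (penalized a g d) bb.
  by move=> d /hmin[b0 [b bmin]]; exists (b0, b) => -[c0 c]; exact: bmin.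
change (fun d => fval L X lam d t) with (penalized_value a g); split.
  exact: penalized_value_nondecreasing.
apply: continuous_in_subspaceT => d; rewrite inE => d_gt0.
exact: penalized_value_continuous.
Qed.
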